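(* Let $T$ be a $k$-IET on $I=[\ell,r)$ over the ordered alphabet $\mathcal{A}=\{a_1<\dots<a_k\}$ with partition $(I_a)_{a\in\mathcal{A}}$ and permutation $\pi\in S_{\mathcal{A}}$. Suppose $|I_{a_1}|=|I_{\pi(a_1)}|$ and $a_1\neq\pi(a_1)$. Let $I'=[\ell+|I_{a_1}|,r)$, $\mathcal{A}'=\mathcal{A}\setminus\{a_1\}$ (with the induced order) and define $\pi'\in S_{\mathcal{A}'}$ by $\pi'(a)=\pi(a_1)$ if $a=\pi^{-1}(a_1)$ and $\pi'(a)=\pi(a)$ otherwise. Then the map induced by $T$ on $I'$ (the first-return map $x\mapsto T^{\nu(x)}(x)$, $\nu(x)=\min\{n>0:T^n(x)\in I'\}$), denoted $\lambda(T)$, is the $(k-1)$-IET on $I'$ over $\mathcal{A}'$ with partition $(I_a)_{a\in\mathcal{A}'}$ and permutation $\pi'$. Moreover, for every $x\in I'$, $\Omega_T(x)=\varphi(\Omega_{\lambda(T)}(x))$, where $\varphi:\mathcal{A}'^*\to\mathcal{A}^*$ (extended to infinite words) is the morphism with $\varphi(\pi(a_1))=\pi(a_1)a_1$ and $\varphi(c)=c$ for every letter $c\neq\pi(a_1)$.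
   Context: A $k$-IET $T$ on $I=[\ell,r)$ over $\mathcal{A}$ is given by a partition of $I$ into left-closed right-open intervals $(I_a)_{a\in\mathcal{A}}$ of positive length, with $I_a$ to the left of $I_b$ whenever $a<b$, and a permutation $\pi$ of $\mathcal{A}$; $T(x)=x+\tau_a$ for $x\in I_a$ where $\tau_a=\sum_{b:\,\pi^{-1}(b)<\pi^{-1}(a)}|I_b|-\sum_{b<a}|I_b|$ (so the image intervals $T(I_{\pi(a_1)}),\dots,T(I_{\pi(a_k)})$ appear from left to right). The trajectory of $x$ under an IET $S$ over an alphabet $\mathcal{C}$ with partition $(J_c)$ is $\Omega_S(x)=w_0w_1\cdots$ with $w_i=c$ iff $S^i(x)\in J_c$. *)

From Stdlib Require Import ClassicalEpsilon.
From mathcomp Require Import all_boot all_order all_algebra.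
From mathcomp Require Import reals.
Set Implicit Arguments. Unset Strict Implicit. Unset Printing Implicit Defensive.
Import Order.TTheory GRing.Theory Num.Theory.
Local Open Scope ring_scope.

(* An IET is described by:
   - [alpha : seq L] : the alphabet listed in increasing order (uniq);
   - [len : L -> R]  : the length |I_a| of each subinterval;
   - [pi : L -> L]   : the permutation, a bijection of the letters of alpha;
   - [l]             : the left endpoint of I. *)

Section IET.
Variables (R : realType) (L : eqType).

Definition is_iet (alpha : seq L) (len : L -> R) (pi : L -> L) : Prop :=
  [/\ uniq alpha, (forall a, a \in alpha -> 0 < len a)
    & perm_eq (map pi alpha) alpha].

Definition pre_len (s : seq L) (len : L -> R) (a : L) : R :=
  \sum_(b <- take (index a s) s) len b.

Definition in_subint (l : R) (alpha : seq L) (len : L -> R) (a : L) (x : R) : bool :=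
  (a \in alpha) &&
  ((l + pre_len alpha len a <= x) && (x < l + pre_len alpha len a + len a)).

(* translation vector tau_a = sum_{pi^-1 b < pi^-1 a} |I_b| - sum_{b<a} |I_b|;
   the images appear in the order [map pi alpha] = [pi a_1; ...; pi a_k]. *)
Definition tau (alpha : seq L) (len : L -> R) (pi : L -> L) (a : L) : R :=
  pre_len (map pi alpha) len a - pre_len alpha len a.

(* the IET map (identity outside I, irrelevant) *)
Definition iet (l : R) (alpha : seq L) (len : L -> R) (pi : L -> L) (x : R) : R :=
  match [seq a <- alpha | in_subint l alpha len a x] with
  | a :: _ => x + tau alpha len pi a
  | [::] => x
  end.

(* letter coding of a point (the default d is only used outside I) *)
Definition letter (d : L) (l : R) (alpha : seq L) (len : L -> R) (y : R) : L :=
  head d [seq a <- alpha | in_subint l alpha len a y].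

Definition traj (d : L) (l : R) (alpha : seq L) (len : L -> R)
  (S : R -> R) (x : R) : nat -> L :=
  fun i => letter d l alpha len (iter i S x).

(* first return time nu(x) = min {n > 0 | S^n x in J} (0 if none) *)
Definition return_time (S : R -> R) (J : pred R) (x : R) : nat :=
  match excluded_middle_informative
          (exists n, (fun n => (0 < n)%N && J (iter n S x)) n) with
  | left H => ex_minn H
  | right _ => 0%N
  end.

Definition induced (S : R -> R) (J : pred R) (x : R) : R :=
  iter (return_time S J x) S x.

(* the morphism phi for given a1 and b = pi(a1) *)
Definition phi_sub (a1 b : L) (c : L) : seq L :=
  if c == b then [:: b; a1] else [:: c].

Definition phi_prefix (a1 b : L) (w : nat -> L) (n : nat) : seq L :=
  flatten [seq phi_sub a1 b (w i) | i <- iota 0 n].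

End IET.

From mathcomp Require Import all_boot all_order all_algebra.
From mathcomp Require Import reals.
From mathcomp Require Import lra.
From Stdlib Require Import ClassicalEpsilon.

Set Implicit Arguments.
Unset Strict Implicit.
Unset Printing Implicit Defensive.
Import Order.TTheory GRing.Theory Num.Theory.
Local Open Scope ring_scope.

(* Since pi(a1) heads the image order and |I_pi(a1)| = |I_a1|, T maps
   I_pi(a1) onto I_a1 = [l, l') and every other I_b into I' = [l', r).  Hence
   the first return to I' takes one step of T, coded b, outside I_pi(a1), and
   two steps, coded pi(a1) a1, on I_pi(a1); in the latter case T^2 translates
   I_pi(a1) to the image slot of a1, which is where pi' puts pi(a1). *)

Lemma mkseqD (T : Type) (f : nat -> T) m n :
  mkseq f (m + n) = mkseq f m ++ mkseq (fun i => f (m + i)%N) n.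
Proof.
by rewrite /mkseq iotaD map_cat add0n -[in iota m n](addn0 m) iotaDl -map_comp.
Qed.

Section IETFacts.
Variables (R : realType) (L : eqType).
Implicit Types (s alpha : seq L) (len : L -> R) (x : R) (a b c : L).

Lemma pre_len_head c s len : pre_len (c :: s) len c = 0.
Proof. by rewrite /pre_len /= eqxx big_nil. Qed.

Lemma pre_len_cons c s len b :
  b != c -> pre_len (c :: s) len b = len c + pre_len s len b.
Proof. by move=> bc; rewrite /pre_len /= eq_sym (negbTE bc) /= big_cons. Qed.

Lemma pre_len_ge0 s len b :
  (forall a, a \in s -> 0 < len a) -> 0 <= pre_len s len b.
Proof.
move=> len_gt0; rewrite /pre_len big_seq.
by apply: sumr_ge0 => a /mem_take /len_gt0 /ltW.
Qed.

Lemma pre_lenD_le_sum s len b :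
  (forall a, a \in s -> 0 < len a) -> b \in s ->
  pre_len s len b + len b <= \sum_(a <- s) len a.
Proof.
elim: s => [|c s IH] //= len_gt0; rewrite inE big_cons.
have len_gt0_s a : a \in s -> 0 < len a by move=> as_; rewrite len_gt0 ?inE ?as_ ?orbT.
have [-> _|bc /= bs] := eqVneq b c.
  by rewrite pre_len_head add0r lerDl big_seq sumr_ge0 // => a /len_gt0_s /ltW.
by rewrite pre_len_cons // -addrA lerD2l IH.
Qed.

Lemma pre_len_map (f : L -> L) s len a :
  {in a :: s &, injective f} -> {in s, forall b, len (f b) = len b} ->
  pre_len (map f s) len (f a) = pre_len s len a.
Proof.
elim: s => [|b s IH] f_inj f_len; first by rewrite /pre_len !big_nil.
have [->|ab] := eqVneq a b; first by rewrite /= !pre_len_head.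
have fab : f a != f b.
  by apply: contra_neq ab => /f_inj; apply; rewrite !inE eqxx ?orbT.
rewrite /= !pre_len_cons // f_len ?mem_head // IH //.
  by apply: sub_in2 f_inj => x; rewrite !inE => /orP[] ->; rewrite ?orbT.
by apply: sub_in1 f_len => x xs; rewrite inE xs orbT.
Qed.

Lemma replace_inj_notin a c s :
  c \notin s -> {in s &, injective (fun b => if b == a then c else b)}.
Proof.
move=> cs x y xs ys; do 2!case: eqP => [->|_] //.
- by move=> cy; move: cs; rewrite cy ys.
- by move=> xc; move: cs; rewrite -xc xs.
Qed.

Lemma in_subint_head l0 c s len x :
  in_subint l0 (c :: s) len c x = (l0 <= x) && (x < l0 + len c).
Proof. by rewrite /in_subint mem_head pre_len_head addr0. Qed.

Lemma in_subint_cons l0 c s len b x :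
  b != c -> in_subint l0 (c :: s) len b x = in_subint (l0 + len c) s len b x.
Proof. by move=> bc; rewrite /in_subint inE (negbTE bc) pre_len_cons // !addrA. Qed.

Lemma in_subint_bounds l0 alpha len a x :
  in_subint l0 alpha len a x ->
  l0 + pre_len alpha len a <= x < l0 + pre_len alpha len a + len a.
Proof. by case/andP. Qed.

Lemma filter_in_subint l0 alpha len a x :
  uniq alpha -> (forall b, b \in alpha -> 0 < len b) ->
  in_subint l0 alpha len a x ->
  exists t, [seq b <- alpha | in_subint l0 alpha len b x] = a :: t.
Proof.
elim: alpha l0 => [|c s IH] l0 //= /andP[cs s_uniq] len_gt0.
have len_gt0_s b : b \in s -> 0 < len b by move=> bs; rewrite len_gt0 ?inE ?bs ?orbT.
rewrite (eq_in_filter (a2 := fun b => in_subint (l0 + len c) s len b x)); last first.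
  by move=> b bs; apply: in_subint_cons; apply: contraNneq cs => <-.
have [-> ->|ac] := eqVneq a c; first by eexists.
rewrite in_subint_cons // => ax; suff -> : in_subint l0 (c :: s) len c x = false.
  exact: IH.
have := pre_len_ge0 a len_gt0_s; move/in_subint_bounds: ax.
by rewrite in_subint_head => ? ?; apply/negP => /andP[_]; lra.
Qed.

Section Partition.
Variables (alpha : seq L) (len : L -> R).
Hypotheses (alpha_uniq : uniq alpha) (len_gt0 : forall a, a \in alpha -> 0 < len a).

Lemma iet_in_subint l0 pi a x :
  in_subint l0 alpha len a x -> iet l0 alpha len pi x = x + tau alpha len pi a.
Proof.
by move=> ax; rewrite /iet; have [t ->] := filter_in_subint alpha_uniq len_gt0 ax.
Qed.

Lemma letter_in_subint d l0 a x :
  in_subint l0 alpha len a x -> letter d l0 alpha len x = a.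
Proof.
by move=> ax; rewrite /letter; have [t ->] := filter_in_subint alpha_uniq len_gt0 ax.
Qed.

Lemma iet_image_bounds l0 pi a x :
  in_subint l0 alpha len a x ->
  l0 + pre_len (map pi alpha) len a <= iet l0 alpha len pi x
    < l0 + pre_len (map pi alpha) len a + len a.
Proof. by move=> ax; rewrite (iet_in_subint _ ax) /tau; move/in_subint_bounds: ax; lra. Qed.

End Partition.

Lemma in_subint_letter d l0 alpha len x :
  uniq alpha -> (forall a, a \in alpha -> 0 < len a) ->
  l0 <= x -> x < l0 + \sum_(a <- alpha) len a ->
  in_subint l0 alpha len (letter d l0 alpha len x) x.
Proof.
move=> alpha_uniq len_gt0 x_ge x_lt; suff [a ax] : exists a, in_subint l0 alpha len a x.
  by rewrite (letter_in_subint _ _ _ ax).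
elim: alpha l0 alpha_uniq len_gt0 x_ge x_lt => [|c s IH] l0 /=.
  by rewrite big_nil addr0 => _ _; lra.
move=> /andP[cs s_uniq] len_gt0 x_ge; rewrite big_cons addrA => x_lt.
have [x_ltc|x_gec] := ltP x (l0 + len c).
  by exists c; rewrite in_subint_head x_ge.
have len_gt0_s a : a \in s -> 0 < len a by move=> as_; rewrite len_gt0 ?inE ?as_ ?orbT.
have [b bx] := IH _ s_uniq len_gt0_s x_gec x_lt.
have bc : b != c by apply: contraNneq cs => <-; case/andP: bx.
by exists b; rewrite in_subint_cons.
Qed.

Lemma induced_iter (S : R -> R) (J : pred R) x n :
  (0 < n)%N -> J (iter n S x) ->
  (forall m, (0 < m < n)%N -> ~~ J (iter m S x)) ->
  induced S J x = iter n S x.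
Proof.
move=> n_gt0 Jn before_n; rewrite /induced /return_time.
case: excluded_middle_informative => [ex|]; last by case; exists n; rewrite n_gt0.
case: ex_minnP => m /andP[m_gt0 Jm] m_min; congr iter; apply/eqP.
rewrite eqn_leq m_min ?n_gt0 // leqNgt; apply: contraL Jm => m_lt.
by rewrite before_n ?m_gt0.
Qed.

Lemma trajD d l0 alpha len (S : R -> R) x m i :
  traj d l0 alpha len S x (m + i) = traj d l0 alpha len S (iter m S x) i.
Proof. by rewrite /traj addnC iterD. Qed.

Lemma phi_prefix_trajS a1 c d l0 alpha len (S : R -> R) x n :
  phi_prefix a1 c (traj d l0 alpha len S x) n.+1 =
  phi_sub a1 c (letter d l0 alpha len x) ++ phi_prefix a1 c (traj d l0 alpha len S (S x)) n.
Proof.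
rewrite /phi_prefix /= (iotaDl 1 0) -map_comp; congr (_ ++ flatten _).
by apply: eq_map => i /=; rewrite trajD.
Qed.

End IETFacts.

Section FirstLetterInduction.
Variables (R : realType) (L : eqType) (l r : R) (a1 : L) (rest : seq L).
Variables (len : L -> R) (pi : L -> L).
Hypotheses (T_iet : is_iet (a1 :: rest) len pi)
  (sum_len : \sum_(a <- a1 :: rest) len a = r - l)
  (len_pi_a1 : len a1 = len (pi a1)) (a1_neq_pi_a1 : a1 != pi a1).

Local Notation alpha := (a1 :: rest).
Local Notation T := (iet l alpha len pi).
Local Notation l' := (l + len a1).
Local Notation J := (fun y : R => (l' <= y) && (y < r)).
Local Notation pi' := (fun a : L => if pi a == a1 then pi a1 else pi a).

Let alpha_uniq : uniq alpha. Proof. by case: T_iet. Qed.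
Let len_gt0 : forall a, a \in alpha -> 0 < len a. Proof. by case: T_iet. Qed.
Let perm_pi : perm_eq (map pi alpha) alpha. Proof. by case: T_iet. Qed.
Let a1_notin_rest : a1 \notin rest. Proof. by case/andP: alpha_uniq. Qed.
Let rest_uniq : uniq rest. Proof. by case/andP: alpha_uniq. Qed.

Let len_gt0_rest a : a \in rest -> 0 < len a.
Proof. by move=> a_rest; rewrite len_gt0 ?inE ?a_rest ?orbT. Qed.

Let pi_a1_notin : pi a1 \notin map pi rest.
Proof. by have := perm_uniq perm_pi; rewrite alpha_uniq /= => /andP[]. Qed.

Let neq_a1 b : b \in rest -> b != a1.
Proof. by move=> b_rest; apply: contraNneq a1_notin_rest => <-. Qed.

Lemma in_subint_rest b y : in_subint l' rest len b y -> in_subint l alpha len b y.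
Proof. by move=> yb; rewrite in_subint_cons // neq_a1 //; case/andP: yb. Qed.

Lemma in_subint_letter_rest y : J y -> in_subint l' rest len (letter a1 l' rest len y) y.
Proof.
case/andP=> y_ge y_lt; apply: in_subint_letter => //.
by have := sum_len; rewrite big_cons => ?; lra.
Qed.

Lemma image_subint_in_J a : a \in alpha -> a != pi a1 ->
  l' <= l + pre_len (map pi alpha) len a /\ l + pre_len (map pi alpha) len a + len a <= r.
Proof.
move=> a_alpha a_neq; split.
  rewrite /= pre_len_cons // -len_pi_a1 lerD2l lerDl pre_len_ge0 // => b b_in.
  by rewrite len_gt0 // -(perm_mem perm_pi) inE b_in orbT.
have len_gt0_image b : b \in map pi alpha -> 0 < len b.
  by rewrite (perm_mem perm_pi) => /len_gt0.
have := pre_lenD_le_sum (b := a) len_gt0_image.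
by rewrite (perm_mem perm_pi) (perm_big _ perm_pi) sum_len => /(_ a_alpha); lra.
Qed.

Lemma iet_in_J a x : in_subint l alpha len a x -> a != pi a1 -> J (T x).
Proof.
move=> xa a_neq; have a_alpha : a \in alpha by case/andP: xa.
have [image_ge image_le] := image_subint_in_J a_alpha a_neq.
by have := iet_image_bounds alpha_uniq len_gt0 pi xa; lra.
Qed.

Lemma iet_pi_a1 y : in_subint l' rest len (pi a1) y -> in_subint l alpha len a1 (T y).
Proof.
move=> /in_subint_rest y_pi_a1; rewrite in_subint_head len_pi_a1.
by have := iet_image_bounds alpha_uniq len_gt0 pi y_pi_a1; rewrite /= pre_len_head addr0.
Qed.

Lemma pre_len_map_pi' b : b != pi a1 ->
  pre_len (map pi' rest) len (if b == a1 then pi a1 else b) = pre_len (map pi rest) len b.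
Proof.
move=> b_neq; rewrite (map_comp (fun c => if c == a1 then pi a1 else c)) pre_len_map //.
  by apply: replace_inj_notin; rewrite inE negb_or eq_sym b_neq.
by move=> c _ /=; case: eqP => // ->.
Qed.

Lemma iet_rest_other b y : in_subint l' rest len b y -> b != pi a1 ->
  iet l' rest len pi' y = T y.
Proof.
move=> yb b_neq; have b_a1 : b != a1 by apply: neq_a1; case/andP: yb.
rewrite (iet_in_subint rest_uniq len_gt0_rest _ yb).
rewrite (iet_in_subint alpha_uniq len_gt0 _ (in_subint_rest yb)).
have := pre_len_map_pi' b_neq; rewrite (negbTE b_a1) /tau => ->.
by rewrite /= !pre_len_cons // len_pi_a1; lra.
Qed.

Lemma iet_rest_pi_a1 y : in_subint l' rest len (pi a1) y ->
  iet l' rest len pi' y = T (T y).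
Proof.
move=> y_pi_a1; have pi_a1_a1 : pi a1 != a1 by rewrite eq_sym.
rewrite (iet_in_subint rest_uniq len_gt0_rest _ y_pi_a1).
rewrite (iet_in_subint alpha_uniq len_gt0 _ (iet_pi_a1 y_pi_a1)).
rewrite (iet_in_subint alpha_uniq len_gt0 _ (in_subint_rest y_pi_a1)).
have := pre_len_map_pi' a1_neq_pi_a1; rewrite eqxx /tau => ->.
by rewrite /= !pre_len_head !pre_len_cons // len_pi_a1; lra.
Qed.

Lemma induced_first_return y : J y ->
  let w := phi_sub a1 (pi a1) (letter a1 l' rest len y) in
  [/\ induced T J y = iter (size w) T y, mkseq (traj a1 l alpha len T y) (size w) = w,
      induced T J y = iet l' rest len pi' y & J (induced T J y)].
Proof.
move=> Jy /=; set b := letter a1 l' rest len y.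
have y_rest : in_subint l' rest len b y := in_subint_letter_rest Jy.
have traj0 : traj a1 l alpha len T y 0 = b.
  exact: (letter_in_subint alpha_uniq len_gt0 _ (in_subint_rest y_rest)).
rewrite /phi_sub; have [b_pi_a1|b_neq] := eqVneq b (pi a1).
- move: y_rest traj0; rewrite b_pi_a1 => y_rest traj0.
  have Ty_a1 := iet_pi_a1 y_rest.
  have J_TTy : J (T (T y)) := iet_in_J Ty_a1 a1_neq_pi_a1.
  have Ty_notin_J : ~~ J (T y).
    by move: Ty_a1; rewrite in_subint_head => /andP[_]; apply: contraTN => /andP[]; lra.
  have induced_TTy : induced T J y = T (T y).
    by apply: (@induced_iter _ _ _ _ 2) => // -[|[|]].
  rewrite induced_TTy iet_rest_pi_a1 //; split => //=.
  by rewrite /mkseq /= traj0 /traj /= (letter_in_subint alpha_uniq len_gt0 _ Ty_a1).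
- have J_Ty : J (T y) := iet_in_J (in_subint_rest y_rest) b_neq.
  have induced_Ty : induced T J y = T y.
    by apply: (@induced_iter _ _ _ _ 1) => // -[|[|]].
  by rewrite induced_Ty (iet_rest_other y_rest) // /mkseq /= traj0.
Qed.

Lemma phi_prefix_traj_induced n y : J y ->
  phi_prefix a1 (pi a1) (traj a1 l' rest len (induced T J) y) n =
  mkseq (traj a1 l alpha len T y)
    (size (phi_prefix a1 (pi a1) (traj a1 l' rest len (induced T J) y) n)).
Proof.
elim: n y => [//|n IH] y Jy; rewrite phi_prefix_trajS.
have [induced_iter_w prefix_w _ J_induced] := induced_first_return Jy.
rewrite size_cat mkseqD prefix_w {1}(IH _ J_induced); congr (_ ++ _).
by apply: eq_mkseq => i; rewrite trajD -induced_iter_w.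
Qed.

End FirstLetterInduction.

Theorem proposition4p4 (R : realType) (L : eqType)
  (l r : R) (a1 : L) (rest : seq L) (len : L -> R) (pi : L -> L) :
  is_iet (a1 :: rest) len pi ->
  \sum_(a <- a1 :: rest) len a = r - l ->
  len a1 = len (pi a1) ->
  a1 != pi a1 ->
  let T := iet l (a1 :: rest) len pi in
  let l' := l + len a1 in
  let J := fun y : R => (l' <= y) && (y < r) in
  let pi' := fun a : L => if pi a == a1 then pi a1 else pi a in
  (forall x, J x -> induced T J x = iet l' rest len pi' x) /\
  (forall x, J x -> forall n : nat,
     let u := phi_prefix a1 (pi a1) (traj a1 l' rest len (induced T J) x) n in
     u = mkseq (traj a1 l (a1 :: rest) len T x) (size u)).
Proof.
move=> T_iet sum_len len_pi_a1 a1_neq T l' J pi'; split=> [x Jx | x Jx n].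
  by have [_ _ -> _] := induced_first_return T_iet sum_len len_pi_a1 a1_neq Jx.
exact: phi_prefix_traj_induced.
Qed.
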